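(* Let $\Omega$ be a locally compact metrisable space and $\{\mu_n\}_{n\in\mathbb{N}}\cup\{\mu\}\subset\mathcal{M}(\Omega)$. Then $\mu_n^+\to\mu^+$ weakly and $\mu_n^-\to\mu^-$ weakly if and only if $\mu_n\to\mu$ vaguely and $\limsup_{n\to\infty}\|\mu_n\|\le\|\mu\|$.
   Context: $\Omega$ carries its Borel $\sigma$-algebra. $\mathcal{M}(\Omega)$ denotes the set of finite signed Radon measures on $\Omega$: finite signed Borel measures $\mu$ with Hahn–Jordan decomposition $\mu=\mu^+-\mu^-$ whose variation $|\mu|=\mu^++\mu^-$ satisfies $|\mu|(A)=\sup\{|\mu|(K):K\subset A,\ K\text{ compact}\}$ for all Borel $A$; $\|\mu\|=|\mu|(\Omega)$. Weak convergence $\nu_n\to\nu$ means $\int f\,d\nu_n\to\int f\,d\nu$ for all bounded continuous $f:\Omega\to\mathbb{R}$; vague convergence means the same for all continuous $f$ with compact support. *)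

From HB Require Import structures.
From mathcomp Require Import all_boot all_order all_algebra.
From mathcomp Require Import all_classical all_reals all_analysis.
Set Implicit Arguments. Unset Strict Implicit. Unset Printing Implicit Defensive.
Import Order.TTheory GRing.Theory Num.Theory.
Import numFieldNormedType.Exports.
Local Open Scope classical_set_scope.
Local Open Scope ring_scope.

Definition borelT (T : ptopologicalType) := g_sigma_algebraType (@open T).

Section signed_measures.
Context {R : realType} {T : ptopologicalType}.
Local Notation BT := (borelT T).

Definition signed_measure := {charge set BT -> \bar R}.

Definition hahn_pos (mu : signed_measure) : set BT :=
  projT1 (cid (Hahn_decomposition mu)).
Definition hahn_neg (mu : signed_measure) : set BT :=
  projT1 (cid (projT2 (cid (Hahn_decomposition mu)))).
Definition hahnP (mu : signed_measure) :
  hahn_decomposition mu (hahn_pos mu) (hahn_neg mu) :=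
  projT2 (cid (projT2 (cid (Hahn_decomposition mu)))).

Definition mpos (mu : signed_measure) := jordan_pos (hahnP mu).
Definition mneg (mu : signed_measure) := jordan_neg (hahnP mu).
Definition mvar (mu : signed_measure) := charge_variation (hahnP mu).

Definition mnorm (mu : signed_measure) : \bar R := mvar mu setT.

Definition radon (mu : signed_measure) : Prop :=
  forall A : set BT, measurable A ->
    mvar mu A = ereal_sup [set mvar mu K | K in [set K : set BT |
                              compact (K : set T) /\ K `<=` A]].

Definition sintegral (mu : signed_measure) (f : T -> R) : \bar R :=
  (\int[mpos mu]_x (f x)%:E - \int[mneg mu]_x (f x)%:E)%E.

Definition bounded_continuous (f : T -> R) : Prop :=
  continuous f /\ exists M : R, forall x, `|f x| <= M.

Definition compactly_supported_continuous (f : T -> R) : Prop :=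
  continuous f /\ exists K : set T, compact K /\ forall x, ~ K x -> f x = 0.

Definition weak_cvg (nu_ : nat -> {measure set BT -> \bar R})
    (nu : {measure set BT -> \bar R}) : Prop :=
  forall f : T -> R, bounded_continuous f ->
    ((fun n => \int[nu_ n]_x (f x)%:E) @ \oo --> \int[nu]_x (f x)%:E)%E.

Definition vague_cvg (mu_ : nat -> signed_measure) (mu : signed_measure) : Prop :=
  forall f : T -> R, compactly_supported_continuous f ->
    (fun n => sintegral (mu_ n) f) @ \oo --> sintegral mu f.

End signed_measures.

From Pilot Require Import Defs.
From HB Require Import structures.
From mathcomp Require Import all_boot all_order all_algebra.
From mathcomp Require Import all_classical all_reals all_analysis.
From mathcomp Require Import finmap ring lra measurable_realfun.
Set Implicit Arguments. Unset Strict Implicit. Unset Printing Implicit Defensive.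
Import Order.TTheory GRing.Theory Num.Theory.
Import numFieldNormedType.Exports.
Local Open Scope classical_set_scope.
Local Open Scope ring_scope.

(* The forward implication is obtained by testing weak convergence against f and
   against 1.  For the converse, Radon regularity of mu gives compact sets K+ and K-
   inside the two Hahn sets carrying mu^+ and mu^- up to e, and Urysohn's lemma gives
   compactly supported g+, g- with values in [0, 1], g+ = 1 on K+, g+ = 0 on K-, and
   symmetrically for g-.  The defect ||mu|| - int (g+ - g-) dmu is then O(e), and by
   vague convergence together with limsup ||mu_n|| <= ||mu|| it stays O(e) for mu_n,
   n large.  A small defect forces int f dmu_n^+ to be close to int f g+ dmu_n (and
   int f dmu_n^- to be close to - int f g- dmu_n), which converge by vague
   convergence. *)

Section bounded_measurable.
Context {d} {X : measurableType d} {R : realType}.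
Implicit Types (f g : X -> R) (c : R).

Definition bounded_measurable f :=
  measurable_fun [set: X] f /\ exists M, forall x, `|f x| <= M.

Lemma bounded_measurable_cst c : bounded_measurable (fun=> c).
Proof. by split; [exact: measurable_cst | exists `|c|]. Qed.

Lemma bounded_measurable_indic (A : set X) :
  measurable A -> bounded_measurable (\1_A).
Proof.
move=> mA; split; first exact: measurable_indic.
by exists 1 => x; rewrite indicE; case: (x \in A); rewrite ?normr1 ?normr0.
Qed.

Lemma bounded_measurableD f g : bounded_measurable f -> bounded_measurable g ->
  bounded_measurable (fun x => f x + g x).
Proof.
move=> [mf [M fM]] [mg [N gN]]; split; first exact: measurable_funD.
by exists (M + N) => x; apply: le_trans (ler_normD _ _) (lerD (fM x) (gN x)).
Qed.

Lemma bounded_measurableN f : bounded_measurable f ->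
  bounded_measurable (fun x => - f x).
Proof.
move=> [mf [M fM]]; split; first exact: measurableT_comp.
by exists M => x; rewrite normrN.
Qed.

Lemma bounded_measurableB f g : bounded_measurable f -> bounded_measurable g ->
  bounded_measurable (fun x => f x - g x).
Proof. by move=> bf bg; apply/bounded_measurableD/bounded_measurableN. Qed.

Lemma bounded_measurableM f g : bounded_measurable f -> bounded_measurable g ->
  bounded_measurable (fun x => f x * g x).
Proof.
move=> [mf [M fM]] [mg [N gN]]; split; first exact: measurable_funM.
by exists (M * N) => x; rewrite normrM; apply: ler_pM.
Qed.

Variable m : {finite_measure set X -> \bar R}.

Lemma bounded_measurable_integrable f : bounded_measurable f ->
  m.-integrable [set: X] (EFin \o f).
Proof.
move=> [mf [M fM]]; apply: measurable_bounded_integrable => //.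
  by rewrite ltey_eq fin_num_measure.
exists M; split; first exact: num_real.
by move=> y My x _ /=; apply: le_trans (fM x) (ltW My).
Qed.

Lemma integral_bounded_measurable f : bounded_measurable f ->
  (\int[m]_x (f x)%:E = (\int[m]_x f x)%:E)%E.
Proof.
move=> bf; rewrite /Rintegral fineK //.
exact: integrable_fin_num (bounded_measurable_integrable bf).
Qed.

Lemma le_normr_Rintegral_bounded f g : bounded_measurable f -> bounded_measurable g ->
  (forall x, `|f x| <= g x) -> `|\int[m]_x f x| <= \int[m]_x g x.
Proof.
move=> bf bg fg; apply: le_trans (le_normr_Rintegral _ _) _ => //.
  exact: bounded_measurable_integrable.
have [intf intg] := (bounded_measurable_integrable bf, bounded_measurable_integrable bg).
by apply: le_Rintegral => //; exact: integrable_norm.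
Qed.

Lemma le_Rintegral_setC (K : set X) f c : measurable K -> bounded_measurable f ->
  (forall x, K x -> f x <= 0) -> (forall x, f x <= c) ->
  \int[m]_x f x <= c * fine (m (~` K)).
Proof.
move=> mK bf fK fc; have mCK : measurable (~` K) by exact: measurableC.
have bCK := bounded_measurable_indic mCK.
have -> : fine (m (~` K)) = \int[m]_x \1_(~` K) x.
  by rewrite /Rintegral integral_indic // setIT.
rewrite -RintegralZl //; last exact: bounded_measurable_integrable.
apply: le_Rintegral => //; [exact: bounded_measurable_integrable|..].
  exact/bounded_measurable_integrable/bounded_measurableM/bCK/bounded_measurable_cst.
move=> x _; rewrite indicE; have [Kx|nKx] := pselect (K x).
  by rewrite memNset ?mulr0 ?fK.
by rewrite mem_set // mulr1.
Qed.

End bounded_measurable.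

Lemma Rintegral_cutoff_le d (X : measurableType d) (R : realType)
    (p q : {finite_measure set X -> \bar R}) (f a u v : X -> R) (M : R) :
  bounded_measurable f -> bounded_measurable a ->
  bounded_measurable u -> bounded_measurable v ->
  (forall x, `|f x| <= M) -> (forall x, `|1 - a x| <= u x) -> (forall x, `|a x| <= v x) ->
  `|\int[p]_x f x - (\int[p]_x (f x * a x) - \int[q]_x (f x * a x))| <=
    M * (\int[p]_x u x + \int[q]_x v x).
Proof.
move=> bf ba bu bv fM au av.
have bfa := bounded_measurableM bf ba.
have bM := bounded_measurable_cst M.
have -> : \int[p]_x f x - (\int[p]_x (f x * a x) - \int[q]_x (f x * a x)) =
    \int[p]_x (f x - f x * a x) + \int[q]_x (f x * a x).
  by rewrite RintegralB //; [lra | exact: bounded_measurable_integrable ..].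
apply: le_trans (ler_normD _ _) _.
rewrite mulrDr -!RintegralZl //; [|exact: bounded_measurable_integrable ..].
apply: lerD; apply: le_normr_Rintegral_bounded => //.
- exact: bounded_measurableB.
- exact: bounded_measurableM.
- move=> x; rewrite -[X in `|X - _|]mulr1 -mulrBr normrM.
  by apply: ler_pM.
- exact: bounded_measurableM.
- by move=> x; rewrite normrM; apply: ler_pM.
Qed.

Lemma cvg_integral_bounded_measurable d (X : measurableType d) (R : realType)
    (m_ : nat -> {finite_measure set X -> \bar R}) (m : {finite_measure set X -> \bar R})
    (f : X -> R) :
  bounded_measurable f -> (fun n => \int[m_ n]_x f x) @ \oo --> \int[m]_x f x ->
  (fun n => \int[m_ n]_x (f x)%:E)%E @ \oo --> (\int[m]_x (f x)%:E)%E.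
Proof.
move=> bf mf; rewrite integral_bounded_measurable //.
under eq_fun do rewrite integral_bounded_measurable //.
by apply: cvg_EFin => //; exact: nearW.
Qed.

Section real_sequences.
Context {R : realType}.

Lemma cvg_from_approx (x_ : nat -> R) (x C : R) :
  (forall e, 0 < e -> exists (y_ : nat -> R) (y : R),
     [/\ y_ @ \oo --> y, `|x - y| <= C * e &
         \forall n \near \oo, `|x_ n - y_ n| <= C * e]) ->
  x_ @ \oo --> x.
Proof.
move=> approx; apply/cvgrPdist_le => e e0.
have k0 : 0 < 2 * `|C| + 1 by rewrite ltr_wpDl ?mulr_ge0.
have d0 : 0 < e / (2 * `|C| + 1) by exact: divr_gt0.
have [y_ [y [/cvgrPdist_le /(_ _ d0) yy xy xy_]]] := approx _ d0.
have -> : e = (2 * `|C| + 1) * (e / (2 * `|C| + 1)).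
  by rewrite mulrC divfK // gt_eqF.
set d := e / _ in d0 xy xy_ yy *.
have Cd : C * d <= `|C| * d by apply: ler_wpM2r; [exact: ltW | exact: ler_norm].
near=> n.
have tri : `|x - x_ n| <= `|x - y| + `|y - y_ n| + `|x_ n - y_ n|.
  rewrite (distrC (x_ n)).
  have -> : x - x_ n = (x - y) + (y - y_ n) + (y_ n - x_ n) by ring.
  by apply: le_trans (ler_normD _ _) _; rewrite lerD2r ler_normD.
have : `|y - y_ n| <= d by near: n; exact: yy.
have : `|x_ n - y_ n| <= C * d by near: n; exact: xy_.
by rewrite mulrDl mul1r; lra.
Unshelve. all: by end_near. Qed.

Lemma limn_esup_le_near (u : nat -> R) (l e : R) :
  (limn_esup (EFin \o u) <= l%:E)%E -> 0 < e -> \forall n \near \oo, u n <= l + e.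
Proof.
move=> ul e0.
have : (limn_esup (EFin \o u) < (l + e)%:E)%E.
  by apply: le_lt_trans ul _; rewrite lte_fin ltrDl.
rewrite /limn_esup /limf_esup => /ereal_inf_lt [_ [V Vinf <-]] hV.
apply: filterS Vinf => n Vn; rewrite -lee_fin; apply/ltW.
by apply: le_lt_trans hV; apply: ereal_sup_ubound; exists n.
Qed.

End real_sequences.

Section compact_support.
Context {R : realType} {T : ptopologicalType}.
Implicit Types f g : T -> R.

Lemma continuous_borel_measurable f : continuous f ->
  measurable_fun [set: borelT T] (f : borelT T -> R).
Proof.
move=> cf; apply: (measurability _ (RGenOpens.measurableE R)).
move=> _ [_ [a [b ->] <-]]; rewrite setTI; apply: sub_sigma_algebra.
by apply: open_comp; [move=> x _; exact: cf | exact: interval_open].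
Qed.

Lemma bounded_continuous_measurable f : bounded_continuous f ->
  bounded_measurable (f : borelT T -> R).
Proof. by move=> [cf bf]; split => //; exact: continuous_borel_measurable. Qed.

Lemma compactly_supported_bounded_continuous f :
  compactly_supported_continuous f -> bounded_continuous f.
Proof.
move=> [cf [K [cK fK]]]; split => //.
have /compact_bounded[M [_ HM]] : compact (f @` K).
  by apply: continuous_compact => //; exact: continuous_subspaceT.
exists (`|M| + 1) => x; have [Kx|nKx] := pselect (K x).
  by apply: HM; [rewrite ltr_pwDr ?ler_norm | exists x].
by rewrite fK // normr0 addr_ge0.
Qed.

Lemma compactly_supported_continuous_measurable f :
  compactly_supported_continuous f -> bounded_measurable (f : borelT T -> R).
Proof.
by move=> /compactly_supported_bounded_continuous/bounded_continuous_measurable.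
Qed.

Lemma compactly_supported_continuousB f g :
  compactly_supported_continuous f -> compactly_supported_continuous g ->
  compactly_supported_continuous (fun x => f x - g x).
Proof.
move=> [cf [K [cK fK]]] [cg [L [cL gL]]]; split.
  by move=> x; apply: cvgB; [exact: cf | exact: cg].
exists (K `|` L); split; first exact: compactU.
by move=> x /not_orP[nK nL]; rewrite fK // gL // subr0.
Qed.

Lemma compactly_supported_continuousMl f g :
  continuous f -> compactly_supported_continuous g ->
  compactly_supported_continuous (fun x => f x * g x).
Proof.
move=> cf [cg [K [cK gK]]]; split.
  by move=> x; apply: cvgM; [exact: cf | exact: cg].
by exists K; split => // x nK; rewrite gK // mulr0.
Qed.

Lemma locally_compact_compact_nbhs (K : set T) : locally_compact [set: T] ->
  compact K -> exists C : set T, compact C /\ K `<=` C°.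
Proof.
move=> lcT cK.
have W (x : T) : {U : set T | nbhs x U /\ compact U}.
  apply: cid; have [U UWx [cptU _]] := @lcT x I.
  by exists U; split => //; rewrite withinET in UWx.
have [D _ KD] : finite_subset_cover K (fun x => (proj1_sig (W x))°) K.
  have cK' := cK; rewrite compact_cover in cK'.
  apply: cK' => [x _|x Kx]; first exact: open_interior.
  by exists x => //; exact: (proj2_sig (W x)).1.
exists (\bigcup_(x in [set` D]) proj1_sig (W x)); split.
  by rewrite bigcup_fset; apply: bigsetU_compact => x _; exact: (proj2_sig (W x)).2.
move=> y /KD[x Dx xy]; apply: interiorS xy.
exact: (@bigcup_sup _ _ x [set` D] (fun z => sval (W z)) Dx).
Qed.

End compact_support.

Section Urysohn_compact_support.
Context {R : realType} {T : pseudoPMetricType R}.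
Hypotheses (hT : hausdorff_space T) (lcT : locally_compact [set: T]).

Lemma compactly_supported_Urysohn (K B : set T) :
  compact K -> closed B -> K `&` B = set0 ->
  exists g : T -> R, [/\ compactly_supported_continuous g,
    forall x, 0 <= g x <= 1, forall x, K x -> g x = 1 & forall x, B x -> g x = 0].
Proof.
move=> cK clB KB; have [C [cC KC]] := locally_compact_compact_nbhs lcT cK.
pose B' := B `|` ~` C°.
have clB' : closed B' by apply: closedU => //; exact/open_closedC/open_interior.
have KB' : K `&` B' = set0.
  rewrite setIUr KB set0U; apply/disjoints_subset => x /KC Cx nCx; exact: nCx Cx.
have sepKB' : uniform_separator K B'.
  apply: (proj1 (@normal_separatorP R T) (@pseudometric_normal R T)) => //.
  exact: compact_closed.
pose u := @Urysohn T R K B'.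
have u1 x : B' x -> u x = 1 by move=> B'x; apply: (Urysohn_sub1 sepKB'); exists x.
exists (fun x => 1 - u x); split.
- split; first by move=> x; apply: cvgB; [exact: cvg_cst | exact: Urysohn_continuous].
  exists C; split => // x Cx; rewrite u1 ?subrr //.
  by right => /interior_subset; exact: Cx.
- move=> x; have := Urysohn_range (A := K) (B := B') (R := R) (ex_intro2 _ _ x I erefl).
  by rewrite /= in_itv /= /u => /andP[? ?]; apply/andP; split; lra.
- move=> x Kx; rewrite (_ : u x = 0) ?subr0 //.
  by apply: (Urysohn_sub0 sepKB'); exists x.
- by move=> x Bx; rewrite u1 ?subrr //; left.
Qed.

End Urysohn_compact_support.

Section jordan_decomposition.
Context {R : realType} {T : ptopologicalType} (mu : @signed_measure R T).
Local Notation BT := (borelT T).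
Local Notation P := (hahn_pos mu).
Local Notation N := (hahn_neg mu).

Lemma measurable_hahn_pos : measurable (P : set BT).
Proof. by have [[]] := hahnP mu. Qed.

Lemma measurable_hahn_neg : measurable (N : set BT).
Proof. by have [_ []] := hahnP mu. Qed.

Lemma hahn_posIneg : P `&` N = set0.
Proof. by have [] := hahnP mu. Qed.

Lemma mposE (A : set BT) : measurable A -> mpos mu A = mu (A `&` P).
Proof. by move=> mA; rewrite /mpos jordan_posE cjordan_posE /crestr0 mem_set. Qed.

Lemma mnegE (A : set BT) : measurable A -> mneg mu A = (- mu (A `&` N))%E.
Proof. by move=> mA; rewrite /mneg jordan_negE cjordan_negE /crestr0 mem_set. Qed.

Lemma mvarE (A : set BT) : mvar mu A = (mpos mu A + mneg mu A)%E.
Proof. by []. Qed.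

Lemma mneg_sub_hahn_pos (A : set BT) : measurable A -> A `<=` P -> mneg mu A = 0%E.
Proof.
move=> mA AP; rewrite mnegE // (_ : A `&` N = set0) ?charge0 ?oppe0 //.
by apply/seteqP; split => [x [/AP Px Nx]|//]; rewrite -hahn_posIneg.
Qed.

Lemma mpos_sub_hahn_neg (A : set BT) : measurable A -> A `<=` N -> mpos mu A = 0%E.
Proof.
move=> mA AN; rewrite mposE // (_ : A `&` P = set0) ?charge0 //.
by apply/seteqP; split => [x [/AN Nx Px]|//]; rewrite -hahn_posIneg.
Qed.

Lemma mpos_setC_hahn_pos : mpos mu (~` P) = 0%E.
Proof.
by rewrite mposE ?setICl ?charge0 //; exact: (measurableC measurable_hahn_pos).
Qed.

Lemma mneg_setC_hahn_neg : mneg mu (~` N) = 0%E.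
Proof.
by rewrite mnegE ?setICl ?charge0 ?oppe0 //; exact: (measurableC measurable_hahn_neg).
Qed.

Hypothesis hT : hausdorff_space T.

Lemma compact_borel_measurable (K : set BT) : compact (K : set T) -> measurable K.
Proof.
move=> cK; rewrite -[K]setCK; apply: measurableC; apply: sub_sigma_algebra.
exact/closed_openC/(compact_closed hT).
Qed.

Lemma radon_inner_approx (m : {finite_measure set BT -> \bar R}) (A : set BT) (e : R) :
  radon mu -> measurable A -> m (~` A) = 0%E ->
  (forall B, measurable B -> B `<=` A -> mvar mu B = m B) -> 0 < e ->
  exists K : set BT, [/\ compact (K : set T), K `<=` A & fine (m (~` K)) <= e].
Proof.
move=> rad mA mCA mvar_m e0.
have mCK (K : set BT) : measurable K -> m (~` K) = (fine (m setT) - fine (m K))%:E.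
  move=> mK; rewrite EFinB !fineK ?fin_num_measure //.
  have := @measureD _ _ _ m setT K measurableT mK; rewrite setTD setTI; apply.
  by rewrite ltey_eq fin_num_measure.
have mTA : fine (m setT) = fine (m A).
  by apply/eqP; rewrite -subr_eq0 -(@eqe R) -mCK // mCA.
have : (m A - e%:E < ereal_sup [set mvar mu K | K in
          [set K : set BT | compact (K : set T) /\ K `<=` A]])%E.
  rewrite -rad // mvar_m // -[m A]fineK ?fin_num_measure // -EFinB lte_fin.
  by rewrite ltrBlDr ltrDl.
move=> /ereal_sup_gt[_ [K [cK KA] <-]]; rewrite mvar_m //; last first.
  exact: compact_borel_measurable.
move=> hK; exists K; split => //.
have mK := compact_borel_measurable cK.
move: hK; rewrite -[m A]fineK ?fin_num_measure // -[m K]fineK ?fin_num_measure //.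
rewrite -EFinB lte_fin => hK.
by rewrite mCK // mTA /=; lra.
Qed.

Lemma mpos_inner_approx (e : R) : radon mu -> 0 < e ->
  exists K : set BT, [/\ compact (K : set T), K `<=` P & fine (mpos mu (~` K)) <= e].
Proof.
move=> rad; apply: radon_inner_approx => //.
- exact: measurable_hahn_pos.
- exact: mpos_setC_hahn_pos.
- by move=> B mB BP; rewrite mvarE mneg_sub_hahn_pos // adde0.
Qed.

Lemma mneg_inner_approx (e : R) : radon mu -> 0 < e ->
  exists K : set BT, [/\ compact (K : set T), K `<=` N & fine (mneg mu (~` K)) <= e].
Proof.
move=> rad; apply: radon_inner_approx => //.
- exact: measurable_hahn_neg.
- exact: mneg_setC_hahn_neg.
- by move=> B mB BN; rewrite mvarE mpos_sub_hahn_neg // add0e.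
Qed.

End jordan_decomposition.

Section hahn_defect.
Context {R : realType} {T : ptopologicalType}.
Local Notation BT := (borelT T).
Implicit Types (nu : @signed_measure R T) (f g : BT -> R).

Definition Rsintegral nu f := \int[mpos nu]_x f x - \int[mneg nu]_x f x.

Lemma sintegral_bounded_measurable nu f : bounded_measurable f ->
  Defs.sintegral nu f = (Rsintegral nu f)%:E.
Proof.
by move=> bf; rewrite /Defs.sintegral /Rsintegral EFinB !integral_bounded_measurable.
Qed.

Lemma mnormE nu : mnorm nu = (\int[mpos nu]_x 1 + \int[mneg nu]_x 1)%:E.
Proof. by rewrite /mnorm mvarE !Rintegral_cst // !mul1r EFinD !fineK ?fin_num_measure. Qed.

(* By [hahn_defectE] this is [||nu|| - int (g1 - g2) dnu]; for [g1, g2] with values in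
   [0, 1] it is the L^1(|nu|) distance from [g1 - g2] to the Hahn sign [1_P - 1_N]. *)
Definition hahn_defect nu (g1 g2 : BT -> R) :=
  \int[mpos nu]_x (1 - g1 x + g2 x) + \int[mneg nu]_x (1 + g1 x - g2 x).

Lemma hahn_defectE nu (g1 g2 : BT -> R) : bounded_measurable g1 -> bounded_measurable g2 ->
  hahn_defect nu g1 g2 = fine (mnorm nu) - Rsintegral nu (fun x => g1 x - g2 x).
Proof.
move=> b1 b2; have b_one := bounded_measurable_cst (X := BT) (1 : R).
rewrite mnormE /hahn_defect /Rsintegral /=; set h := fun x => g1 x - g2 x.
have bh : bounded_measurable h := bounded_measurableB b1 b2.
rewrite (eq_Rintegral _ (g := fun x => 1 - h x)); last by move=> x _; rewrite /h; ring.
rewrite [X in _ + X](eq_Rintegral _ (g := fun x => 1 + h x));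
  last by move=> x _; rewrite /h; ring.
clearbody h; rewrite RintegralB ?RintegralD //; first ring.
all: exact: bounded_measurable_integrable.
Qed.

Lemma hahn_weights_bounded_measurable (g1 g2 : BT -> R) :
  bounded_measurable g1 -> bounded_measurable g2 ->
  bounded_measurable (fun x => 1 - g1 x + g2 x) /\
  bounded_measurable (fun x => 1 + g1 x - g2 x).
Proof.
move=> b1 b2; have b_one := bounded_measurable_cst (X := BT) (1 : R).
by split; [apply/bounded_measurableD/b2/bounded_measurableB |
           apply/bounded_measurableB/b2/bounded_measurableD].
Qed.

Section cutoff.
Variables (nu : @signed_measure R T) (f g1 g2 : BT -> R) (M : R).
Hypotheses (bf : bounded_measurable f) (fM : forall x, `|f x| <= M).
Hypotheses (b1 : bounded_measurable g1) (b2 : bounded_measurable g2).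
Hypotheses (g1_01 : forall x, 0 <= g1 x <= 1) (g2_01 : forall x, 0 <= g2 x <= 1).

Let b_weights := hahn_weights_bounded_measurable b1 b2.

Lemma mpos_Rintegral_cutoff :
  `|\int[mpos nu]_x f x - Rsintegral nu (fun x => f x * g1 x)| <=
    M * hahn_defect nu g1 g2.
Proof.
have [bu bv] := b_weights.
apply: Rintegral_cutoff_le => // x; have /andP[? ?] := g1_01 x;
  have /andP[? ?] := g2_01 x; rewrite ger0_norm; lra.
Qed.

Lemma mneg_Rintegral_cutoff :
  `|\int[mneg nu]_x f x - - Rsintegral nu (fun x => f x * g2 x)| <=
    M * hahn_defect nu g1 g2.
Proof.
rewrite /hahn_defect /Rsintegral opprB [X in M * X]addrC.
have [bu bv] := b_weights.
apply: Rintegral_cutoff_le => // x; have /andP[? ?] := g1_01 x;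
  have /andP[? ?] := g2_01 x; rewrite ger0_norm; lra.
Qed.

End cutoff.

End hahn_defect.

Lemma exists_small_hahn_defect {R : realType} {T : pseudoPMetricType R}
    (mu : @signed_measure R T) (e : R) :
  hausdorff_space T -> locally_compact [set: T] -> radon mu -> 0 < e ->
  exists g1 g2 : T -> R,
  [/\ compactly_supported_continuous g1, compactly_supported_continuous g2,
      (forall x, 0 <= g1 x <= 1), (forall x, 0 <= g2 x <= 1) &
      hahn_defect mu g1 g2 <= e].
Proof.
move=> hT lcT rad e0; have e4 : 0 < e / 4 by exact: divr_gt0.
have e_split : 2 * (e / 4) + 2 * (e / 4) = e by lra.
have [K1 [cK1 K1P hK1]] := mpos_inner_approx hT rad e4.
have [K2 [cK2 K2N hK2]] := mneg_inner_approx hT rad e4.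
have K12 : K1 `&` K2 = set0.
  by apply/seteqP; split => [x [/K1P Px /K2N Nx]|//]; rewrite -(hahn_posIneg mu).
have [g1 [cs1 r1 e1 z1]] :=
  compactly_supported_Urysohn hT lcT cK1 (compact_closed hT cK2) K12.
have [g2 [cs2 r2 e2 z2]] :=
  compactly_supported_Urysohn hT lcT cK2 (compact_closed hT cK1) (etrans (setIC _ _) K12).
exists g1, g2; split => //.
have b1 := compactly_supported_continuous_measurable cs1.
have b2 := compactly_supported_continuous_measurable cs2.
have [bu bv] := hahn_weights_bounded_measurable b1 b2.
have [u_le2 v_le2] : (forall x, 1 - g1 x + g2 x <= 2) /\ (forall x, 1 + g1 x - g2 x <= 2).
  by split=> x; have /andP[? ?] := r1 x; have /andP[? ?] := r2 x; lra.
have hpos : \int[mpos mu]_x (1 - g1 x + g2 x) <= 2 * (e / 4).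
  apply: le_trans (le_Rintegral_setC _ (compact_borel_measurable hT cK1) bu _ u_le2) _.
    by move=> x K1x; rewrite e1 // z2 // subrr add0r.
  by rewrite ler_pM2l.
have hneg : \int[mneg mu]_x (1 + g1 x - g2 x) <= 2 * (e / 4).
  apply: le_trans (le_Rintegral_setC _ (compact_borel_measurable hT cK2) bv _ v_le2) _.
    by move=> x K2x; rewrite e2 // z1 // addr0 subrr.
  by rewrite ler_pM2l.
by rewrite /hahn_defect -e_split lerD.
Qed.

Section weak_to_vague.
Context {R : realType} {T : ptopologicalType}.
Variables (mu_ : nat -> @signed_measure R T) (mu : @signed_measure R T).
Hypotheses (wpos : weak_cvg (fun n => mpos (mu_ n)) (mpos mu))
  (wneg : weak_cvg (fun n => mneg (mu_ n)) (mneg mu)).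

Lemma weak_cvg_jordan_sintegral (f : T -> R) : bounded_continuous f ->
  (fun n => Defs.sintegral (mu_ n) f) @ \oo --> Defs.sintegral mu f.
Proof.
move=> bcf; have bf := bounded_continuous_measurable bcf.
apply: cvgeB (wpos bcf) (wneg bcf); apply: fin_num_adde_defl.
by rewrite fin_numN integral_bounded_measurable.
Qed.

Lemma weak_cvg_jordan_vague : vague_cvg mu_ mu.
Proof.
by move=> f /compactly_supported_bounded_continuous; exact: weak_cvg_jordan_sintegral.
Qed.

Lemma weak_cvg_jordan_mnorm : (fun n => mnorm (mu_ n)) @ \oo --> mnorm mu.
Proof.
have bc1 : bounded_continuous (fun _ : T => 1 : R).
  by split; [move=> x; exact: cvg_cst | exists 1 => x; rewrite normr1].
have b1 := bounded_continuous_measurable bc1.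
have mnormE' (nu : @signed_measure R T) :
    mnorm nu = (\int[mpos nu]_x 1%:E + \int[mneg nu]_x 1%:E)%E.
  by rewrite mnormE EFinD !integral_bounded_measurable.
rewrite mnormE'; under eq_fun do rewrite mnormE'.
apply: cvgeD (wpos bc1) (wneg bc1); apply: fin_num_adde_defl.
by rewrite integral_bounded_measurable.
Qed.

End weak_to_vague.

Section vague_to_weak.
Context {R : realType} {T : pseudoPMetricType R}.
Hypotheses (hT : hausdorff_space T) (lcT : locally_compact [set: T]).
Variables (mu_ : nat -> @signed_measure R T) (mu : @signed_measure R T).
Hypotheses (rad : radon mu) (mu_vague : vague_cvg mu_ mu)
  (mnorm_limsup : (limn_esup (fun n => mnorm (mu_ n)) <= mnorm mu)%E).

Lemma vague_cvg_Rsintegral (f : T -> R) : compactly_supported_continuous f ->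
  (fun n => Rsintegral (mu_ n) f) @ \oo --> Rsintegral mu f.
Proof.
move=> cf; have := mu_vague cf.
have bf := compactly_supported_continuous_measurable cf.
rewrite sintegral_bounded_measurable // => /fine_cvg.
by under eq_fun do rewrite sintegral_bounded_measurable //.
Qed.

Lemma hahn_defect_near (g1 g2 : T -> R) (e : R) : 0 < e ->
  compactly_supported_continuous g1 -> compactly_supported_continuous g2 ->
  hahn_defect mu g1 g2 <= e ->
  \forall n \near \oo, hahn_defect (mu_ n) g1 g2 <= 3 * e.
Proof.
move=> e0 cs1 cs2 De.
have b1 := compactly_supported_continuous_measurable cs1.
have b2 := compactly_supported_continuous_measurable cs2.
have mnorm_fin (nu : @signed_measure R T) : mnorm nu = (fine (mnorm nu))%:E.
  by rewrite mnormE.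
have norm_near : \forall n \near \oo, fine (mnorm (mu_ n)) <= fine (mnorm mu) + e.
  apply: limn_esup_le_near e0; rewrite -mnorm_fin.
  by under [X in limn_esup X]eq_fun do rewrite /= -mnorm_fin.
have /cvgrPdist_le /(_ e e0) S_near :=
  vague_cvg_Rsintegral (compactly_supported_continuousB cs1 cs2).
rewrite hahn_defectE // in De; near=> n; rewrite hahn_defectE //.
have : fine (mnorm (mu_ n)) <= fine (mnorm mu) + e by near: n.
have : `|Rsintegral mu (fun x => g1 x - g2 x) -
         Rsintegral (mu_ n) (fun x => g1 x - g2 x)| <= e by near: n.
by rewrite ler_norml => /andP[? ?] ?; lra.
Unshelve. all: by end_near. Qed.

Lemma cvg_hahn_defect_approx (val : @signed_measure R T -> R)
    (approx : @signed_measure R T -> (T -> R) -> (T -> R) -> R) (M : R) : 0 <= M ->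
  (forall g1 g2, compactly_supported_continuous g1 -> compactly_supported_continuous g2 ->
     (fun n => approx (mu_ n) g1 g2) @ \oo --> approx mu g1 g2) ->
  (forall nu g1 g2,
     compactly_supported_continuous g1 -> compactly_supported_continuous g2 ->
     (forall x, 0 <= g1 x <= 1) -> (forall x, 0 <= g2 x <= 1) ->
     `|val nu - approx nu g1 g2| <= M * hahn_defect nu g1 g2) ->
  (fun n => val (mu_ n)) @ \oo --> val mu.
Proof.
move=> M0 approx_cvg approx_le; apply: (@cvg_from_approx _ _ _ (M * 3)) => e e0.
have [g1 [g2 [cs1 cs2 r1 r2 De]]] := exists_small_hahn_defect hT lcT rad e0.
have e3 : e <= 3 * e by lra.
exists (fun n => approx (mu_ n) g1 g2), (approx mu g1 g2); split.
- exact: approx_cvg.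
- apply: le_trans (approx_le _ _ _ cs1 cs2 r1 r2) _.
  by rewrite -mulrA ler_wpM2l // (le_trans De).
- apply: filterS (hahn_defect_near e0 cs1 cs2 De) => n Dn.
  by apply: le_trans (approx_le _ _ _ cs1 cs2 r1 r2) _; rewrite -mulrA ler_wpM2l.
Qed.

Lemma vague_weak_cvg_mpos : weak_cvg (fun n => mpos (mu_ n)) (mpos mu).
Proof.
move=> f bcf; have [cf [M fM]] := bcf.
have fM' x : `|f x| <= `|M| by apply: le_trans (fM x) (ler_norm M).
apply: cvg_integral_bounded_measurable (bounded_continuous_measurable bcf) _.
apply: (cvg_hahn_defect_approx (val := fun nu => \int[mpos nu]_x f x)
  (approx := fun nu g1 g2 => Rsintegral nu (fun x => f x * g1 x)) (normr_ge0 M)).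
  by move=> g1 g2 cs1 _; exact/vague_cvg_Rsintegral/compactly_supported_continuousMl.
move=> nu g1 g2 cs1 cs2 r1 r2; apply: mpos_Rintegral_cutoff => //.
- exact: bounded_continuous_measurable.
- exact: compactly_supported_continuous_measurable.
- exact: compactly_supported_continuous_measurable.
Qed.

Lemma vague_weak_cvg_mneg : weak_cvg (fun n => mneg (mu_ n)) (mneg mu).
Proof.
move=> f bcf; have [cf [M fM]] := bcf.
have fM' x : `|f x| <= `|M| by apply: le_trans (fM x) (ler_norm M).
apply: cvg_integral_bounded_measurable (bounded_continuous_measurable bcf) _.
apply: (cvg_hahn_defect_approx (val := fun nu => \int[mneg nu]_x f x)
  (approx := fun nu g1 g2 => - Rsintegral nu (fun x => f x * g2 x)) (normr_ge0 M)).
  move=> g1 g2 _ cs2; apply: cvgN.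
  exact/vague_cvg_Rsintegral/compactly_supported_continuousMl.
move=> nu g1 g2 cs1 cs2 r1 r2; apply: mneg_Rintegral_cutoff => //.
- exact: bounded_continuous_measurable.
- exact: compactly_supported_continuous_measurable.
- exact: compactly_supported_continuous_measurable.
Qed.

End vague_to_weak.

Theorem proposition2p8 (R : realType) (T : pseudoPMetricType R)
  (hT : hausdorff_space T) (lcT : locally_compact [set: T])
  (mu_ : nat -> @signed_measure R T) (mu : @signed_measure R T)
  (rad_ : forall n, radon (mu_ n)) (rad : radon mu) :
  ((weak_cvg (fun n => mpos (mu_ n)) (mpos mu) /\
    weak_cvg (fun n => mneg (mu_ n)) (mneg mu)) <->
   (vague_cvg mu_ mu /\
    (limn_esup (fun n => mnorm (mu_ n)) <= mnorm mu)%E)).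
Proof.
split=> [[wpos wneg]|[vague limsup]].
  split; first exact: weak_cvg_jordan_vague.
  by have [_ ->] := cvg_limn_einf_sup (weak_cvg_jordan_mnorm wpos wneg).
by split; [exact: vague_weak_cvg_mpos | exact: vague_weak_cvg_mneg].
Qed.
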